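(* Let $G=(V,E)$ be an undirected graph without self-loops, let $u\ne v$ be vertices with $u$ dominating $v$, and let $\vec z=(z_1,\dots,z_N)$ be a list of all vertices of $V$ in which $v$ occurs before $u$. Let $O_{\mathrm{lex}}(\vec a,\vec b)$ be the constraint $\sum_{i=1}^N 2^{N-i}(b_i-a_i)\ge0$, let $\omega$ swap $u$ and $v$, and let $C$ be $u+\bar v\ge1$. Then for every set $\mathcal D$ of PB constraints and every $k\in\mathbb Z\cup\{\infty\}$: $$F_G\cup\mathcal D\cup\{f\le k-1\}\cup\{\neg C\}\vdash F_G|_\omega\cup O_{\mathrm{lex}}(\vec z|_\omega,\vec z)\cup\{f|_\omega\le f\},$$ $$F_G\cup\mathcal D\cup\{f\le k-1\}\cup\{\neg C\}\cup O_{\mathrm{lex}}(\vec z,\vec z|_\omega)\vdash 0\ge1,$$ i.e. the dominance-based strengthening conditions hold for deriving $u+\bar v\ge1$ with witness $\omega$ from any configuration with core set $F_G$, derived set $\mathcal D$, preorder $(O_{\mathrm{lex}},\vec z)$ and bound $k$.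
   Context: Each vertex $w\in V$ is identified with a Boolean variable. $F_G$ is the PB formula consisting of $\bar a+\bar b\ge1$ for all distinct non-adjacent $a,b\in V$; the objective is $f=\sum_{w\in V}\bar w$. $N(w)=\{w':(w,w')\in E\}$; for distinct $a,b$, $a$ dominates $b$ if $N(a)\setminus\{b\}\supseteq N(b)\setminus\{a\}$. A literal is a variable or its negation $\bar x=1-x$; a PB constraint is $\sum_i a_i\ell_i\ge A$ with negation $\sum_i-a_i\ell_i\ge -A+1$. For a substitution $\omega$, $C|_\omega$ replaces each literal by its image, and $G|_\omega$, $f|_\omega$ likewise. $O(\vec z|_\alpha,\vec z|_\beta)$ is $O(\vec a,\vec b)$ with $a_i$ replaced by $\alpha(z_i)$ and $b_i$ by $\beta(z_i)$ (by $z_i$ itself when no substitution is indicated). $\vdash$ denotes cutting planes derivability (axioms, literal axioms $\ell\ge0$, positive integer linear combinations, division with rounding up), extended so that $H\vdash D$ whenever $0\ge1$ is derivable from $H\cup\{\neg D\}$. $f\le\infty-1$ is the trivially true constraint. *)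

From mathcomp Require Import all_boot all_order all_algebra.
Set Implicit Arguments. Unset Strict Implicit. Unset Printing Implicit Defensive.
Import Order.TTheory GRing.Theory Num.Theory.
Local Open Scope ring_scope.

Section PB.
Variable V : finType.

(* literal (x, true) = x, (x, false) = \bar x *)
Definition lit := (V * bool)%type.

(* syntactic PB constraint  sum_i a_i l_i >= A *)
Record pbc := PBC { terms : seq (int * lit) ; deg : int }.

Definition pb_neg (C : pbc) : pbc :=
  PBC [seq (- t.1, t.2) | t <- terms C] (- deg C + 1).

Definition pb_false : pbc := PBC [::] 1.

(* normal form: coefficient on each variable and degree, using \bar x = 1 - x *)
Definition nf := ({ffun V -> int} * int)%type.

Definition term_coef (x : V) (t : int * lit) : int :=
  if t.2.1 == x then (if t.2.2 then t.1 else - t.1) else 0.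

Definition norm (C : pbc) : nf :=
  ([ffun x => \sum_(t <- terms C) term_coef x t],
   deg C - \sum_(t <- terms C | ~~ t.2.2) t.1).

Definition nf_add (n1 n2 : nf) : nf :=
  ([ffun x => n1.1 x + n2.1 x], n1.2 + n2.2).

Definition nf_mul (c : int) (n : nf) : nf :=
  ([ffun x => c * n.1 x], c * n.2).

(* ceiling of m / d for d > 0 *)
Definition ceilz (m d : int) : int := - ((- m) %/ d)%Z.

(* division with rounding up, performed on the literal normal form
   (all coefficients nonnegative: a negative coefficient -a on x is read as
   a \bar x - a). *)
Definition nf_div (d : int) (n : nf) : nf :=
  ([ffun x => if 0 <= n.1 x then ceilz (n.1 x) d else - ceilz (- n.1 x) d],
   ceilz (n.2 + \sum_(x | n.1 x < 0) (- n.1 x)) d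
     - \sum_(x | n.1 x < 0) ceilz (- n.1 x) d).

Inductive cp (H : nf -> Prop) : nf -> Prop :=
| cp_ax n : H n -> cp H n
| cp_lit (l : lit) : cp H (norm (PBC [:: (1, l)] 0))
| cp_add n1 n2 : cp H n1 -> cp H n2 -> cp H (nf_add n1 n2)
| cp_mul c n : 0 < c -> cp H n -> cp H (nf_mul c n)
| cp_div d n : 0 < d -> cp H n -> cp H (nf_div d n).

Definition cpd (H : pbc -> Prop) (C : pbc) : Prop :=
  cp (fun n => exists2 D, H D & norm D = n) (norm C).

Definition setU1pb (H : pbc -> Prop) (C : pbc) : pbc -> Prop :=
  fun D => H D \/ D = C.

Definition setUpb (H1 H2 : pbc -> Prop) : pbc -> Prop :=
  fun D => H1 D \/ H2 D.

Definition derives (H : pbc -> Prop) (C : pbc) : Prop :=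
  cpd H C \/ cpd (setU1pb H (pb_neg C)) pb_false.

Definition derives_set (H S : pbc -> Prop) : Prop :=
  forall C, S C -> derives H C.

Definition subst_lit (w : V -> lit) (l : lit) : lit :=
  if l.2 then w l.1 else ((w l.1).1, ~~ (w l.1).2).

Definition pb_subst (w : V -> lit) (C : pbc) : pbc :=
  PBC [seq (t.1, subst_lit w t.2) | t <- terms C] (deg C).

Definition set_subst (w : V -> lit) (S : pbc -> Prop) : pbc -> Prop :=
  fun D => exists2 C, S C & D = pb_subst w C.

Definition swap_subst (u v : V) : V -> lit :=
  fun x => if x == u then (v, true) else if x == v then (u, true) else (x, true).

(* O_lex(a, b) : sum_{i=1}^N 2^(N-i) (b_i - a_i) >= 0 *)
Definition olex (a b : seq lit) : pbc :=
  let N := size b in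
  PBC (flatten [seq let: (i, (ai, bi)) := q in
                    [:: ((2 ^+ (N - i.+1)%N : int), bi); (- (2 ^+ (N - i.+1)%N : int), ai)]
               | q <- zip (iota 0 N) (zip a b)]) 0.

(* objective f = sum_w \bar w, as a list of terms *)
Definition obj_terms : seq (int * lit) := [seq (1, (w, false)) | w <- enum V].

(* f <= k - 1 (k = None stands for infinity: trivially true constraint 0 >= 0) *)
Definition obj_le (k : option int) : pbc :=
  match k with
  | Some k => PBC [seq (- t.1, t.2) | t <- obj_terms] (- (k - 1))
  | None => PBC [::] 0
  end.

Definition obj_subst_le (w : V -> lit) : pbc :=
  PBC (obj_terms ++ [seq (- t.1, subst_lit w t.2) | t <- obj_terms]) 0.

Variable e : rel V.

Definition simple_graph : Prop := symmetric e /\ irreflexive e.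

Definition nbhd (a : V) : {set V} := [set w | e a w].

Definition dominates (a b : V) : Prop :=
  a != b /\ (nbhd b :\ a) \subset (nbhd a :\ b).

Definition FG : pbc -> Prop :=
  fun C => exists a b, [/\ a != b, ~~ e a b & C = PBC [:: (1, (a, false)); (1, (b, false))] 1].

End PB.

(* The swap w = (u v) maps a clause of F_G to a clause of F_G unless the
   image is an edge, and domination forces such an image to contain u; so
   every clause of F_G|w is in F_G or follows from ~C, i.e. from u = 0 and
   v = 1.  As w only exchanges u and v, both
   O_lex(z|w, z) and O_lex(z, z|w) reduce to +/- c (v - u) >= 0 with
   c = 2^(N - i_v) - 2^(N - i_u) > 0: the first is c * ~C weakened, while
   adding c * ~C to the second gives 0 >= c, i.e. 0 >= 1 after division by c.
   Finally the objective is invariant under renaming, so f|w <= f is 0 >= 0. *)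

From mathcomp Require Import all_boot all_order all_algebra perm fingroup zify.
Set Implicit Arguments. Unset Strict Implicit. Unset Printing Implicit Defensive.
Import Order.TTheory GRing.Theory Num.Theory.
Local Open Scope ring_scope.

Lemma map_index_iota (T : eqType) (s : seq T) :
  uniq s -> [seq index x s | x <- s] = iota 0 (size s).
Proof.
elim: s => //= x s IHs /andP[xNs /IHs IH]; rewrite eqxx -add1n iotaDl -IH -map_comp.
congr cons; apply/eq_in_map => y ys /=.
by have [yx|//] := eqVneq y x; rewrite -yx ys in xNs.
Qed.

Section NormalForms.
Variable V : finType.

Lemma nf_ext (n1 n2 : nf V) : n1.1 =1 n2.1 -> n1.2 = n2.2 -> n1 = n2.
Proof. by case: n1 n2 => [f1 d1] [f2 d2] /= Hf ->; congr pair; apply/ffunP. Qed.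

Definition nf_cst (m : int) : nf V := ([ffun=> 0], m).

Lemma nf_div_cst (d m : int) : nf_div d (nf_cst m) = nf_cst (ceilz m d).
Proof.
apply: nf_ext => [x|] /=; first by rewrite !ffunE lexx /ceilz oppr0 div0z oppr0.
by rewrite !big_pred0 => [|x|x]; rewrite ?ffunE ?ltxx // addr0 subr0.
Qed.

End NormalForms.

Lemma ceilzz (c : int) : c != 0 -> ceilz c c = 1.
Proof. by move=> c0; rewrite /ceilz -(mulN1r c) mulzK ?opprK. Qed.

Section Derivations.
Variables (V : finType) (H : nf V -> Prop).

Lemma cp_cst (x : V) (m : int) : m <= 0 -> cp H (nf_cst V m).
Proof.
have taut : cp H (nf_cst V (-1)).
  have -> : nf_cst V (-1) = nf_add (norm (PBC [:: (1, (x, true))] 0))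
                                      (norm (PBC [:: (1, (x, false))] 0)).
    apply: nf_ext => [y|] /=; rewrite ?ffunE !big_cons !big_nil //= /term_coef /=.
    by case: (x == y); rewrite ?addr0 ?subrr.
  by apply: cp_add; apply: cp_lit.
rewrite le_eqVlt => /orP[/eqP->|m_lt0].
  have <- : nf_div 2 (nf_cst V (-1)) = nf_cst V 0 by rewrite nf_div_cst.
  exact: cp_div.
have -> : nf_cst V m = nf_mul (- m) (nf_cst V (-1)).
  by apply: nf_ext => [y|] /=; rewrite ?ffunE ?mulr0 // mulrN1 opprK.
by apply: cp_mul; rewrite ?oppr_gt0.
Qed.

Lemma cp_false (c : int) : 0 < c -> cp H (nf_cst V c) -> cp H (norm (pb_false V)).
Proof.
move=> c_gt0 Hc; have -> : norm (pb_false V) = nf_div c (nf_cst V c).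
  rewrite nf_div_cst ceilzz ?gt_eqF //.
  by apply: nf_ext => [x|]; rewrite /= ?ffunE big_nil ?subr0.
exact: cp_div.
Qed.

End Derivations.

Lemma cpd_hyp (V : finType) (H : pbc V -> Prop) (C : pbc V) : H C -> cpd H C.
Proof. by move=> HC; apply: cp_ax; exists C. Qed.

Section LexOrder.
Variables (V : finType) (z : seq V).
Hypotheses (z_uniq : uniq z) (z_total : forall x, x \in z).

Definition lex_weight (x : V) : int := 2 ^+ (size z - (index x z).+1).

Lemma lex_weight_lt (x y : V) : (index x z < index y z)%N -> lex_weight y < lex_weight x.
Proof.
move=> xy; rewrite /lex_weight ltr_eXn2l //.
have : (index y z < size z)%N by rewrite index_mem z_total.
by lia.
Qed.

Lemma sum_enum_pick (F : V -> int) (a : V) :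
  \sum_(y <- z) (if y == a then F y else 0) = F a.
Proof.
rewrite big_uniq // -big_mkcondr /= (eq_bigl (pred1 a)) ?big_pred1_eq // => y.
by rewrite /= z_total.
Qed.

Lemma norm_olex_perm (g h : {perm V}) :
  norm (olex [seq (g y, true) | y <- z] [seq (h y, true) | y <- z]) =
  ([ffun x => lex_weight (h^-1%g x) - lex_weight (g^-1%g x)], 0).
Proof.
rewrite /olex size_map -(map_index_iota z_uniq) !zip_map.
apply: nf_ext => [x|] /=; last first.
  by rewrite big_flatten !big_map big1 ?subr0 // => y _; rewrite !big_cons big_nil.
rewrite !ffunE big_flatten !big_map /=.
under eq_bigr => y _ do rewrite !big_cons big_nil addr0 /term_coef /=
  !(can2_eq (permK _) (permKV _)).
by rewrite big_split /= (sum_enum_pick lex_weight) (sum_enum_pick (fun y => - lex_weight y)).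
Qed.
End LexOrder.

Section Renaming.
Variables (V : finType) (s : {perm V}) (w : V -> lit V).
Hypothesis wE : w =1 fun x => (s x, true).

Lemma subst_lit_perm (l : lit V) : subst_lit w l = (s l.1, l.2).
Proof. by rewrite /subst_lit wE; case: l => x []. Qed.

Lemma norm_obj_subst_le_perm : norm (obj_subst_le w) = nf_cst V 0.
Proof.
apply: nf_ext => [x|] /=.
  rewrite !ffunE big_cat /obj_terms !big_map /=.
  under eq_bigr => y _ do rewrite /term_coef /=.
  under [X in _ + X]eq_bigr => y _ do
    rewrite /term_coef subst_lit_perm /= opprK (can2_eq (permK _) (permKV _)).
  by rewrite -!big_mkcond /= -enumT !big_enum_cond /= !big_pred1_eq addNr.
rewrite big_cat /obj_terms !big_map.
under [X in _ - (_ + X)]eq_bigl => y do rewrite subst_lit_perm.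
by rewrite /= sumrN addrN subr0.
Qed.
End Renaming.

Section Swap.
Variables (V : finType) (u v : V).
Local Notation s := (tperm u v).

Definition dom_clause : pbc V := PBC [:: (1, (u, true)); (1, (v, false))] 1.

Definition not_both (a b : V) : pbc V := PBC [:: (1, (a, false)); (1, (b, false))] 1.

Definition basis_diff : {ffun V -> int} := [ffun x => (x == v)%:R - (x == u)%:R].

Lemma swap_substE : swap_subst u v =1 fun x => (s x, true).
Proof.
move=> x; rewrite /swap_subst; case: tpermP => [->|->|/eqP/negbTE-> /eqP/negbTE->] //.
- by rewrite eqxx.
- by case: ifP => [/eqP->|_]; rewrite ?eqxx.
Qed.

Lemma pb_subst_swap_not_both (a b : V) :
  pb_subst (swap_subst u v) (not_both a b) = not_both (s a) (s b).
Proof. by rewrite /pb_subst /= !(subst_lit_perm swap_substE). Qed.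

Lemma norm_neg_dom_clause : norm (pb_neg dom_clause) = (basis_diff, 1).
Proof.
apply: nf_ext => [x|] /=; rewrite ?ffunE !big_cons big_nil /term_coef //=.
by rewrite !(eq_sym x); case: (u == x); case: (v == x).
Qed.

Lemma norm_not_bothC (a b : V) : norm (not_both a b) = norm (not_both b a).
Proof. by apply: nf_ext => [x|] /=; rewrite ?ffunE !big_cons big_nil //= !addr0 addrC. Qed.

Section NegatedClause.
Variable H : pbc V -> Prop.
Hypothesis H_neg : H (pb_neg dom_clause).

Lemma cpd_not_both_of_neg (y : V) : cpd H (not_both u y).
Proof.
rewrite /cpd; have -> : norm (not_both u y) =
    nf_add (norm (PBC [:: (1, (y, false))] 0))
           (nf_add (norm (PBC [:: (1, (v, false))] 0)) (norm (pb_neg dom_clause))).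
  rewrite norm_neg_dom_clause; apply: nf_ext => [x|] /=;
    rewrite ?ffunE !big_cons !big_nil /term_coef //= !(eq_sym x).
  by case: (u == x); case: (v == x); case: (y == x).
by do 2![apply: cp_add; first exact: cp_lit]; apply: cpd_hyp.
Qed.
End NegatedClause.

Section LexSwap.
Variable z : seq V.
Hypotheses (z_uniq : uniq z) (z_total : forall x, x \in z) (vu : (index v z < index u z)%N).
Hypothesis u_neq_v : u != v.

Let c := lex_weight z v - lex_weight z u.

Lemma lex_weight_swap_gt0 : 0 < c.
Proof. by rewrite subr_gt0 lex_weight_lt. Qed.

Lemma lex_weight_tperm x : lex_weight z x - lex_weight z (s x) = c * basis_diff x.
Proof.
rewrite ffunE; case: tpermP => [->|->|/eqP/negbTE-> /eqP/negbTE->].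
- by rewrite eqxx (negbTE u_neq_v) sub0r mulrN1 opprB.
- by rewrite eqxx eq_sym (negbTE u_neq_v) subr0 mulr1.
- by rewrite !subrr mulr0.
Qed.

Lemma norm_olex_swap :
  norm (olex [seq (s y, true) | y <- z] [seq (y, true) | y <- z]) =
  ([ffun x => c * basis_diff x], 0).
Proof.
have -> : [seq (y, true) | y <- z] = [seq ((1 : {perm V})%g y, true) | y <- z].
  by apply: eq_map => y; rewrite perm1.
rewrite norm_olex_perm // invg1 tpermV; congr pair; apply/ffunP => x.
by rewrite [LHS]ffunE perm1 lex_weight_tperm [RHS]ffunE.
Qed.

Lemma norm_olex_swapC :
  norm (olex [seq (y, true) | y <- z] [seq (s y, true) | y <- z]) =
  ([ffun x => - (c * basis_diff x)], 0).
Proof.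
have -> : [seq (y, true) | y <- z] = [seq ((1 : {perm V})%g y, true) | y <- z].
  by apply: eq_map => y; rewrite perm1.
rewrite norm_olex_perm // invg1 tpermV; congr pair; apply/ffunP => x.
by rewrite [LHS]ffunE [RHS]ffunE perm1 -lex_weight_tperm opprB.
Qed.

Section LexDerivations.
Variable H : pbc V -> Prop.
Hypothesis H_neg : H (pb_neg dom_clause).

Lemma cpd_olex_swap : cpd H (olex [seq (s y, true) | y <- z] [seq (y, true) | y <- z]).
Proof.
rewrite /cpd norm_olex_swap.
have -> : ([ffun x => c * basis_diff x], 0) =
          nf_add (nf_mul c (norm (pb_neg dom_clause))) (nf_cst V (- c)).
  rewrite norm_neg_dom_clause.
  by apply: nf_ext => [x|] /=; rewrite ?ffunE ?addr0 // mulr1 addrN.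
apply: cp_add; first exact: cp_mul lex_weight_swap_gt0 (cpd_hyp H_neg).
by apply: (cp_cst _ u); rewrite oppr_le0 ltW // lex_weight_swap_gt0.
Qed.

Lemma cpd_false_olex_swap :
  H (olex [seq (y, true) | y <- z] [seq (s y, true) | y <- z]) -> cpd H (pb_false V).
Proof.
move=> H_olex; apply: (cp_false lex_weight_swap_gt0).
have -> : nf_cst V c =
    nf_add (norm (olex [seq (y, true) | y <- z] [seq (s y, true) | y <- z]))
           (nf_mul c (norm (pb_neg dom_clause))).
  rewrite norm_olex_swapC norm_neg_dom_clause.
  by apply: nf_ext => [x|] /=; rewrite ?ffunE ?mulr1 ?add0r // addNr.
exact: cp_add (cpd_hyp H_olex) (cp_mul lex_weight_swap_gt0 (cpd_hyp H_neg)).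
Qed.
End LexDerivations.

End LexSwap.
End Swap.

Section Domination.
Variables (V : finType) (e : rel V) (u v : V).
Hypotheses (e_sym : symmetric e) (u_dom : dominates e u v).
Local Notation s := (tperm u v).

Lemma dominates_adj (y : V) : y != u -> e v y -> e u y.
Proof.
move=> yu evy; have : y \in nbhd e v :\ u by rewrite !inE yu evy.
by move/(subsetP u_dom.2); rewrite !inE => /andP[].
Qed.

Lemma tperm_edge_of_nonedge (a b : V) :
  a != b -> ~~ e a b -> e (s a) (s b) -> s a = u \/ s b = u.
Proof.
move=> ab nab; case: (tpermP u v a) => [a_u|_|/eqP au /eqP av]; [|by left|];
  case: (tpermP u v b) => [b_u|_|/eqP bu /eqP bv]; try by move=> _; right.
- by rewrite a_u b_u eqxx in ab.
- by move=> /(dominates_adj bu); rewrite -a_u (negbTE nab).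
- by rewrite e_sym => /(dominates_adj au); rewrite e_sym -b_u (negbTE nab).
- by rewrite (negbTE nab).
Qed.

Lemma cpd_subst_FG (H : pbc V -> Prop) :
  (forall C, FG e C -> H C) -> H (pb_neg (dom_clause u v)) ->
  forall T, set_subst (swap_subst u v) (FG e) T -> cpd H T.
Proof.
move=> H_FG H_neg _ [_ [a [b [ab nab ->]]] ->].
rewrite -[PBC _ 1]/(not_both a b) pb_subst_swap_not_both.
case E: (e (s a) (s b)).
  case: (tperm_edge_of_nonedge ab nab E) => ->; first exact: cpd_not_both_of_neg H_neg _.
  by rewrite /cpd norm_not_bothC; apply: cpd_not_both_of_neg H_neg _.
apply/cpd_hyp/H_FG; exists (s a), (s b); split=> //; first by rewrite (inj_eq perm_inj).
by rewrite E.
Qed.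

End Domination.

Theorem mainTheorem13 (V : finType) (e : rel V) (u v : V) (z : seq V)
  (D : pbc V -> Prop) (k : option int) :
  simple_graph e ->
  u != v ->
  dominates e u v ->
  uniq z -> (forall x, x \in z) -> (index v z < index u z)%N ->
  let w := swap_subst u v in
  let C := PBC [:: (1, (u, true)); (1, (v, false))] 1 in
  let zl := [seq (x, true) | x <- z] in
  let H := setU1pb (setU1pb (setUpb (FG e) D) (obj_le V k)) (pb_neg C) in
  derives_set H (setU1pb (setU1pb (set_subst w (FG e))
                           (olex (map (subst_lit w) zl) zl)) (obj_subst_le w))
  /\ derives (setU1pb H (olex zl (map (subst_lit w) zl))) (pb_false V).
Proof.
move=> [e_sym _] u_neq_v u_dom z_uniq z_total vu w C zl H.
have H_neg : H (pb_neg C) by right.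
have -> : map (subst_lit w) zl = [seq (tperm u v y, true) | y <- z].
  by rewrite -map_comp; apply: eq_map => y; rewrite /= (subst_lit_perm (swap_substE u v)).
split.
- move=> T [[T_FG|->]|->]; left.
  + by apply: cpd_subst_FG T_FG => // ? ?; do 3!left.
  + exact: cpd_olex_swap.
  + by rewrite /cpd (norm_obj_subst_le_perm (swap_substE u v)); apply: (cp_cst _ u).
- left; apply: (cpd_false_olex_swap z_uniq z_total vu u_neq_v); first by left; right.
  by right.
Qed.
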